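(* In the roundabout exploration process described in the context (with $k\ge 1$), let $t=\lfloor N/(2k)\rfloor$. Then $|A(t)|\le 6k$.
   Context: Let $n\ge 2$ and $k\ge 1$ be natural numbers, $T$ a tree on an $n$-element vertex set $V$, and $N=2(n-1)$. Fix a root $r$ and a DFS tour of $T$ starting and ending at $r$ that traverses each edge of $T$ exactly twice, giving a cyclic vertex sequence $(v_1,\dots,v_N,v_{N+1})$ with $v_{N+1}=v_1=r$, and tour edges $e_i=\{v_i,v_{i+1}\}$ for $i\in[N]$. For $i,j\in[N]$ the circular interval $[\![i,j]\!]$ is $\{i,i+1,\dots,j\}$ if $i\le j$ and $\{i,\dots,N,1,\dots,j\}$ if $i>j$. Let $\langle G_1,\dots,G_N\rangle$ be graphs on $V$, each containing all but at most $k$ edges of $T$. Roundabout exploration process: agents $a_1,\dots,a_N$ with initial states $s_i(0)=i$. For steps $t=1,\dots,N$: (Movement) for every $i\in[N]$, if $s_i(t-1)=q$ then $s_i(t)=(q\bmod N)+1$ if $e_q\in E(G_t)$, and $s_i(t)=q$ otherwise. Let $D_i(t)=[\![i,s_i(t)]\!]$ and $D_i(0)=\{i\}$. (Elimination) $A(0)=\{a_1,\dots,a_N\}$; $A(t)$ is obtained from $A(t-1)$ by repeatedly removing an arbitrary agent $a_i$ of the current set with $D_i(t)\subseteq\bigcup D_j(t)$ over the other agents $a_j$ of the current set, until no such agent remains. *)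

From mathcomp Require Import all_boot.
Set Implicit Arguments. Unset Strict Implicit. Unset Printing Implicit Defensive.

Definition simple_graph (T : finType) (E : rel T) : Prop :=
  symmetric E /\ irreflexive E.

Definition is_tree (T : finType) (E : rel T) : Prop :=
  simple_graph E /\
  (forall x y : T, connect E x y) /\
  (forall c : seq T, 3 <= size c -> ~ ucycle E c).

Definition missing_edges (n : nat) (Tr G : rel 'I_n) : nat :=
  #|[set p : 'I_n * 'I_n | (p.1 < p.2) && Tr p.1 p.2 && ~~ G p.1 p.2]|.

Definition tourlen (n : nat) : nat := 2 * (n - 1).

(* v : nat -> 'I_n encodes (v_1, ..., v_{N+1}) (values at 1..N+1 are used).
   It is a closed walk from r to r in the tree traversing each tree edge
   exactly twice. *)
Definition dfs_tour (n : nat) (Tr : rel 'I_n) (r : 'I_n) (v : nat -> 'I_n) : Prop :=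
  let N := tourlen n in
  [/\ v 1 = r, v N.+1 = r,
      (forall q, 1 <= q <= N -> Tr (v q) (v q.+1)) &
      (forall x y : 'I_n, Tr x y ->
         #|[set q : 'I_N.+1 | (1 <= q) && ([set v q; v q.+1] == [set x; y])]| = 2)].

Definition cint (N i j x : nat) : bool :=
  if i <= j then (i <= x <= j) else ((i <= x <= N) || (1 <= x <= j)).

Section Process.
Variables (n : nat) (v : nat -> 'I_n) (G : nat -> rel 'I_n).
Local Notation N := (tourlen n).

(* one movement at step t of an agent in state q: e_q = {v_q, v_{q+1}} *)
Definition move (t q : nat) : nat :=
  if G t (v q) (v q.+1) then (q %% N).+1 else q.

Fixpoint state (i t : nat) : nat :=
  match t with
  | 0 => i
  | t'.+1 => move t'.+1 (state i t')
  end.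

Definition inD (i t x : nat) : bool := cint N i (state i t) x.

(* Agents are indexed by 1..N, represented in 'I_N.+1 (index 0 unused). *)
Definition agents : {set 'I_N.+1} := [set i : 'I_N.+1 | 0 < i].

Definition removable (t : nat) (S : {set 'I_N.+1}) (i : 'I_N.+1) : Prop :=
  i \in S /\
  (forall x : nat, inD i t x -> exists j : 'I_N.+1, [/\ j \in S, j != i & inD j t x]).

Inductive elim_reach (t : nat) : {set 'I_N.+1} -> {set 'I_N.+1} -> Prop :=
| elim_refl S : elim_reach t S S
| elim_step S i S' : removable t S i -> elim_reach t (S :\ i) S' -> elim_reach t S S'.

Definition elim_outcome (t : nat) (S S' : {set 'I_N.+1}) : Prop :=
  elim_reach t S S' /\ (forall i, ~ removable t S' i).

Definition valid_run (A : nat -> {set 'I_N.+1}) : Prop :=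
  A 0 = agents /\ (forall t, 1 <= t <= N -> elim_outcome t (A t.-1) (A t)).

End Process.

(* Let p_j(t) be the number of moves of agent j and b_j(t) the number of steps at
   which it was blocked, so p_j + b_j = t for t < N and |D_j(t)| = p_j + 1.  After
   elimination no surviving arc is covered by two others; as the arcs are intervals
   of the N-cycle, every position lies in at most two surviving arcs, whence
   sum_j |D_j(t)| <= 2N.  Surviving agents are in distinct states, hence were in
   distinct states at every earlier step (agents sharing a state move together),
   and an agent blocked at step tau sits on a tour edge missing from G_tau; each
   tree edge occurs twice in the tour, so at most 2k agents are blocked per step
   and sum_j b_j(t) <= 2kt.  Thus |A(t)| (t + 1) <= 2N + 2kt < 6k (t + 1) for
   t = N %/ 2k. *)

From mathcomp Require Import all_boot zify.
Set Implicit Arguments. Unset Strict Implicit. Unset Printing Implicit Defensive.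

Definition cdist (N a b : nat) : nat := if a <= b then b - a else b + N - a.

Lemma cint_cdist N i s x : 1 <= i <= N -> 1 <= s <= N ->
  cint N i s x = (1 <= x <= N) && (cdist N i x <= cdist N i s).
Proof. by rewrite /cint /cdist => *; repeat case: ifP => ?; lia. Qed.

Lemma cdist_lt N a x : 1 <= a <= N -> 1 <= x <= N -> cdist N a x < N.
Proof. by rewrite /cdist; case: ifP => ?; lia. Qed.

Lemma cdist_succ N i s : 1 <= i <= N -> 1 <= s <= N -> (cdist N i s).+1 < N ->
  cdist N i (s %% N).+1 = (cdist N i s).+1.
Proof.
move=> i_range s_range; have [s_lt | s_ge] := ltnP s N.
  by rewrite modn_small // /cdist; repeat case: ifP => ?; lia.
have -> : s = N by lia.
by rewrite modnn /cdist; repeat case: ifP => ?; lia.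
Qed.

(* Arcs are proper (length < N): seen from the common point x, the arc of c reaches
   back no further than that of a and forward no further than that of b. *)
Lemma arc_subset_arcU N a b c x y ea eb ec :
  1 <= a <= N -> 1 <= b <= N -> 1 <= c <= N -> 1 <= x <= N -> 1 <= y <= N ->
  ea < N -> eb < N -> ec < N ->
  cdist N a x <= ea -> cdist N b x <= eb -> cdist N c x <= ec ->
  cdist N c x <= cdist N a x -> ec - cdist N c x <= eb - cdist N b x ->
  cdist N c y <= ec -> (cdist N a y <= ea) || (cdist N b y <= eb).
Proof. by rewrite /cdist; repeat case: ifP => ?; lia. Qed.

Lemma card_le_fibers (T U : finType) (f : T -> U) (A : {set T}) (B : {set U}) m :
  {in A, forall x, f x \in B} ->
  (forall y, y \in B -> #|[set x in A | f x == y]| <= m) ->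
  #|A| <= #|B| * m.
Proof.
move=> fAB fibers; rewrite -sum1_card (partition_big f (mem B)) //=.
by rewrite -sum_nat_const; apply: leq_sum => y yB; rewrite sum1dep_card fibers.
Qed.

Lemma sum_bool_card (I : finType) (A : {set I}) (P : pred I) :
  \sum_(i in A) P i = #|[set i in A | P i]|.
Proof. by rewrite -sum1dep_card big_mkcondr; apply: eq_bigr => i _; case: (P i). Qed.

Lemma sum_card_exchange (I J : finType) (A : {set I}) (R : I -> J -> bool) :
  \sum_(i in A) #|[set j | R i j]| = \sum_j #|[set i in A | R i j]|.
Proof.
under eq_bigr do rewrite -sum1dep_card.
by rewrite (exchange_big_dep predT) //; apply: eq_bigr => j _; rewrite sum1dep_card.
Qed.

Section Roundabout.
Variables (n : nat) (v : nat -> 'I_n) (G : nat -> rel 'I_n).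
Local Notation N := (tourlen n).
Local Notation s := (state v G).
Local Notation D := (inD v G).

Definition missing_tour_edges (G' : rel 'I_n) : {set 'I_N.+1} :=
  [set q : 'I_N.+1 | (1 <= q) && ~~ G' (v q) (v q.+1)].

Lemma card_missing_tour_edges (Tr : rel 'I_n) r (G' : rel 'I_n) :
  is_tree Tr -> dfs_tour Tr r v -> simple_graph G' ->
  #|missing_tour_edges G'| <= 2 * missing_edges Tr G'.
Proof.
move=> [[Tr_sym Tr_irr] _] [_ _ tour_edge tour_twice] [G'_sym _].
pose e q : 'I_n * 'I_n := if v q < v q.+1 then (v q, v q.+1) else (v q.+1, v q).
have e_ends q : [set (e q).1; (e q).2] = [set v q; v q.+1].
  by rewrite /e; case: ifP => //= _; rewrite setUC.
rewrite /missing_edges mulnC; apply: (@card_le_fibers _ _ (fun q : 'I_N.+1 => e q)) => [q | p].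
  rewrite !inE => /andP [q_gt0 q_missing].
  have /tour_edge q_tree : 1 <= q <= N by rewrite q_gt0 -ltnS ltn_ord.
  rewrite /e; case: (ltngtP (v q) (v q.+1)) => /= [lt_q | gt_q | /val_inj eq_q].
  - by rewrite lt_q q_tree.
  - by rewrite gt_q Tr_sym q_tree G'_sym.
  - by rewrite eq_q Tr_irr in q_tree.
rewrite inE => /andP [/andP [_ p_tree] _]; rewrite -(tour_twice _ _ p_tree).
apply: subset_leq_card; apply/subsetP => q.
by rewrite !inE => /andP [/andP [-> _] /eqP <-]; rewrite e_ends eqxx.
Qed.

Lemma state_eq_mono i j t t' :
  t <= t' -> s i t = s j t -> s i t' = s j t'.
Proof.
move=> le_tt' eq_t; elim: t' le_tt' => [|t' IH]; first by rewrite leqn0 => /eqP <-.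
by rewrite leq_eqVlt => /predU1P [<- // | /IH /= ->].
Qed.

Hypothesis N_gt0 : 0 < N.

Lemma state_range i t : 1 <= i <= N -> 1 <= s i t <= N.
Proof.
move=> i_range; elim: t => [//|t IH] /=; rewrite /move; case: ifP => // _.
by have := ltn_pmod (s i t) N_gt0; lia.
Qed.

Definition progress i t := cdist N i (s i t).

Definition blocked i t := \sum_(tau < t) ~~ G tau.+1 (v (s i tau)) (v (s i tau).+1).

Lemma progress_lt i t : 1 <= i <= N -> progress i t < N.
Proof. by move=> i_range; apply/cdist_lt/state_range. Qed.

(* Before time N an agent cannot wrap around past its start, so each move adds one
   to its progress. *)
Lemma progress_add_blocked i t : 1 <= i <= N -> t < N -> progress i t + blocked i t = t.
Proof.
move=> i_range; elim: t => [|t IH] lt_tN.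
  by rewrite /progress /blocked big_ord0 /cdist leqnn subnn.
have := IH (ltnW lt_tN); have := state_range t i_range.
rewrite /progress /blocked big_ord_recr /= /move; case: ifP => /= _ s_range IH'.
  by rewrite cdist_succ //; lia.
by lia.
Qed.

Lemma inD_progress i t x : 1 <= i <= N ->
  D i t x = (1 <= x <= N) && (cdist N i x <= progress i t).
Proof. by move=> i_range; rewrite /inD cint_cdist // state_range. Qed.

Definition Dset t i : {set 'I_N.+1} := [set x : 'I_N.+1 | D i t x].

Lemma progress_lt_card_Dset i t : 1 <= i <= N -> progress i t < #|Dset t i|.
Proof.
move=> i_range; set e := progress i t.
have e_lt : e < N by apply: progress_lt.
pose w (u : nat) := if i + u <= N then i + u else i + u - N.
have w_lt (u : 'I_e.+1) : w u < N.+1 by have := ltn_ord u; rewrite /w; case: ifP => ?; lia.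
pose f (u : 'I_e.+1) : 'I_N.+1 := inord (w u).
have f_inj : injective f.
  move=> u u' /(congr1 (@nat_of_ord _)); rewrite /f !inordK // => eq_w.
  apply: ord_inj; move: eq_w (ltn_ord u) (ltn_ord u'); rewrite /w.
  by repeat case: ifP => ?; lia.
rewrite -[e.+1]card_ord -(card_imset _ f_inj); apply: subset_leq_card.
apply/subsetP => _ /imsetP [u _ ->]; rewrite inE inD_progress // /f inordK //.
by have := ltn_ord u; rewrite /w /cdist; repeat case: ifP => ?; lia.
Qed.

Lemma agentsP (j : 'I_N.+1) : j \in agents n -> 1 <= j <= N.
Proof. by rewrite inE => ->; rewrite -ltnS ltn_ord. Qed.

Lemma card_agents : #|agents n| = N.
Proof.
have -> : agents n = [set~ ord0] by apply/setP => j; rewrite !inE lt0n.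
by rewrite cardsC1 card_ord.
Qed.

Section Stable.
Variables (t : nat) (S : {set 'I_N.+1}).
Hypotheses (S_agents : S \subset agents n) (S_stable : forall i, ~ removable v G t S i).

Let S_range j : j \in S -> 1 <= j <= N.
Proof. by move=> /(subsetP S_agents); apply: agentsP. Qed.

Lemma stable_not_dominated (c a b : 'I_N.+1) x :
  c \in S -> a \in S -> b \in S -> a != c -> b != c ->
  D a t x -> D b t x -> D c t x ->
  cdist N c x <= cdist N a x ->
  progress c t - cdist N c x <= progress b t - cdist N b x -> False.
Proof.
move=> cS aS bS ac bc.
have [a_range b_range c_range] := And3 (S_range aS) (S_range bS) (S_range cS).
rewrite !inD_progress // => /andP [x_range ax] /andP [_ bx] /andP [_ cx] back fwd.
apply: (@S_stable c); split => // y; rewrite inD_progress // => /andP [y_range cy].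
have := arc_subset_arcU a_range b_range c_range x_range y_range
  (progress_lt t a_range) (progress_lt t b_range) (progress_lt t c_range) ax bx cx back fwd cy.
by case/orP => [ya | yb]; [exists a | exists b]; rewrite inD_progress // y_range.
Qed.

(* Agents in a common state have nested arcs. *)
Lemma stable_state_inj : {in S &, injective (fun j : 'I_N.+1 => s j t)}.
Proof.
move=> i j iS jS eq_ij; have [// | ij] := eqVneq i j; exfalso.
wlog le_ji : i j iS jS eq_ij ij / progress j t <= progress i t.
  move=> wlog_le; case: (leqP (progress j t) (progress i t)) => [|/ltnW]; first exact: wlog_le.
  by apply: wlog_le; rewrite // eq_sym.
have [i_range j_range] := conj (S_range iS) (S_range jS).
have end_in k : 1 <= k <= N -> D k t (s k t).
  by move=> k_range; rewrite inD_progress // state_range // leqnn.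
apply: (@stable_not_dominated j i i (s j t)); rewrite ?end_in //.
- by rewrite -eq_ij end_in.
- by rewrite -eq_ij end_in.
- by move: le_ji; rewrite /progress eq_ij.
- by rewrite /progress subnn.
Qed.

Lemma stable_card_coverers_le2 x : #|[set j in S | D j t x]| <= 2.
Proof.
set T := [set j in S | D j t x]; rewrite leqNgt; apply/negP => T_gt2.
have [j0 j0T] : exists j0, j0 \in T by apply/card_gt0P; apply: leq_ltn_trans T_gt2.
pose back j := cdist N j x; pose fwd j := progress j t - cdist N j x.
case: (@arg_maxnP _ j0 (mem T) back j0T) => a aT a_max.
case: (@arg_maxnP _ j0 (mem T) fwd j0T) => b bT b_max.
have /subsetPn [c cT] : ~~ (T \subset [set a; b]).
  apply: contraTN T_gt2 => /subset_leq_card; rewrite cards2 -leqNgt => le_T.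
  by apply: leq_trans le_T _; case: (a != b).
rewrite !inE negb_or => /andP [ca cb].
move: (aT) (bT) (cT); rewrite !inE => /andP [aS ax] /andP [bS bx] /andP [cS cx].
by apply: (stable_not_dominated cS aS bS _ _ ax bx cx (a_max c cT) (b_max c cT));
  rewrite eq_sym.
Qed.

Lemma stable_sum_card_Dset : \sum_(j in S) #|Dset t j| <= 2 * N.
Proof.
rewrite sum_card_exchange big_ord_recl.
have -> : [set j in S | D j t (@ord0 N)] = set0.
  by apply/setP => j; rewrite !inE; case jS: (j \in S); rewrite //= inD_progress ?S_range.
rewrite cards0 add0n mulnC -[N in N * 2]card_ord -sum_nat_const.
by apply: leq_sum => x _; apply: stable_card_coverers_le2.
Qed.

(* At step tau the blocked agents of S sit at distinct positions q with e_q missing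
   from G_tau. *)
Lemma stable_sum_blocked K :
  (forall tau, tau < t -> #|missing_tour_edges (G tau.+1)| <= K) ->
  \sum_(j in S) blocked j t <= t * K.
Proof.
move=> missing_le; rewrite /blocked exchange_big /= -[t in t * K]card_ord -sum_nat_const.
apply: leq_sum => tau _; apply: leq_trans (missing_le _ (ltn_ord tau)); rewrite sum_bool_card.
set B := [set j in S | _].
pose q (j : 'I_N.+1) : 'I_N.+1 := inord (s j tau).
have s_lt j : j \in S -> s j tau < N.+1 by move/S_range/(state_range tau); lia.
have q_inj : {in B &, injective q}.
  move=> i j; rewrite !inE => /andP [iS _] /andP [jS _] /(congr1 (@nat_of_ord _)).
  rewrite /q !inordK ?s_lt // => eq_tau; apply: stable_state_inj => //=.
  exact: state_eq_mono (ltnW (ltn_ord tau)) eq_tau.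
rewrite -(card_in_imset q_inj); apply: subset_leq_card.
apply/subsetP => _ /imsetP [j /[!inE] /andP [jS j_blocked] ->].
by rewrite /q inordK ?s_lt // j_blocked andbT; case/andP: (state_range tau (S_range jS)).
Qed.

End Stable.

Lemma card_stable_le t (S : {set 'I_N.+1}) K :
  t < N -> S \subset agents n -> (forall i, ~ removable v G t S i) ->
  (forall tau, tau < t -> #|missing_tour_edges (G tau.+1)| <= K) ->
  #|S| * t.+1 <= 2 * N + t * K.
Proof.
move=> lt_tN S_agents S_stable missing_le.
apply: leq_trans (leq_add (stable_sum_card_Dset S_agents S_stable)
                          (stable_sum_blocked S_agents S_stable missing_le)).
rewrite -big_split /= -sum_nat_const; apply: leq_sum => j jS.
have j_range := agentsP (subsetP S_agents _ jS).
by rewrite -{1}(progress_add_blocked j_range lt_tN) -addSn leq_add2r progress_lt_card_Dset.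
Qed.

End Roundabout.

Lemma elim_reach_subset n (v : nat -> 'I_n) G t S S' :
  elim_reach v G t S S' -> S' \subset S.
Proof.
elim=> [S0 | S0 i S1 _ _ sub]; first exact: subxx.
exact: subset_trans sub (subsetDl _ _).
Qed.

Lemma valid_run_subset n (v : nat -> 'I_n) G A t :
  valid_run v G A -> t <= tourlen n -> A t \subset agents n.
Proof.
case=> A0 A_step; elim: t => [|t IH] le_tN; first by rewrite A0.
have [reach _] := A_step t.+1 le_tN.
exact: subset_trans (elim_reach_subset reach) (IH (ltnW le_tN)).
Qed.

Theorem corollary9 (n k : nat) (Tr : rel 'I_n) (r : 'I_n) (v : nat -> 'I_n)
    (G : nat -> rel 'I_n) (A : nat -> {set 'I_(tourlen n).+1}) :
  2 <= n -> 1 <= k ->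
  is_tree Tr ->
  dfs_tour Tr r v ->
  (forall t, 1 <= t <= tourlen n -> simple_graph (G t)) ->
  (forall t, 1 <= t <= tourlen n -> missing_edges Tr (G t) <= k) ->
  valid_run v G A ->
  #|A (tourlen n %/ (2 * k))| <= 6 * k.
Proof.
move=> n_ge2 k_gt0 tree tour simple missing_le run.
have N_gt0 : 0 < tourlen n by rewrite /tourlen; lia.
set t := tourlen n %/ (2 * k).
have N_lt : tourlen n < t.+1 * (2 * k) by apply: ltn_ceil; lia.
have t_lt : t < tourlen n by apply: ltn_Pdiv; lia.
have [t0 | t_gt0] := posnP t.
  by move: N_lt; rewrite t0 (proj1 run) card_agents; lia.
have t_range : 1 <= t <= tourlen n by rewrite t_gt0 ltnW.
have [_ stable] := proj2 run t t_range.
have missing_tour_le tau : tau < t -> #|missing_tour_edges v (G tau.+1)| <= 2 * k.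
  move=> lt_tau; have tau_range : 1 <= tau.+1 <= tourlen n by lia.
  apply: leq_trans (card_missing_tour_edges tree tour (simple _ tau_range)) _.
  by rewrite leq_mul2l missing_le.
have := card_stable_le N_gt0 t_lt (valid_run_subset run (ltnW t_lt)) stable missing_tour_le.
nia.
Qed.
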